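(* Let $0<|a|<M$ and let $(x,\xi)\in\Gamma^+\cup\Gamma^-$. If $\xi\cdot\partial_t>0$ or $\xi\cdot v_{\mathcal H}>0$, then $\xi$ is future pointing.
   Context: ${\rm M}_{\rm I}=\mathbb R_t\times(r_+,\infty)_r\times\mathbb S^2_{\theta,\varphi}$ is the Kerr exterior in Boyer–Lindquist coordinates with $r_+=M+\sqrt{M^2-a^2}$, $\Delta=r^2-2Mr+a^2$, $\rho^2=r^2+a^2\cos^2\theta$, $\sigma^2=(r^2+a^2)^2-a^2\Delta\sin^2\theta$, metric $g=-(1-\tfrac{2Mr}{\rho^2})dt^2-\tfrac{4aMr\sin^2\theta}{\rho^2}dt\,d\varphi+\tfrac{\rho^2}{\Delta}dr^2+\rho^2d\theta^2+\tfrac{\sigma^2}{\rho^2}\sin^2\theta\,d\varphi^2$, time-oriented by declaring $-\nabla t$ future directed; $\xi$ is future pointing if $v\cdot\xi>0$ for all future directed timelike $v$. Covectors $\xi=\xi_tdt+\xi_rdr+\xi_\theta d\theta+\xi_\varphi d\varphi$, so $\xi\cdot\partial_t=\xi_t$. $v_{\mathcal H}=\partial_t+\Omega_{\mathcal H}\partial_\varphi$ with $\Omega_{\mathcal H}=a/(r_+^2+a^2)$. With $p(x,\xi)=g_x^{-1}(\xi,\xi)$, null bicharacteristics are integral curves of the Hamiltonian vector field $H_p$ in $\{p=0\}\setminus o\subset T^*{\rm M}_{\rm I}$. A maximally extended bicharacteristic $\gamma$ is trapped as $s\to+\infty$ if there are $r_+<r_0<R_0<\infty$ with $r_0\le r(\gamma(s))\le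 R_0$ for all $s\ge 0$; $\Gamma^-$ is the union of all bicharacteristics trapped as $s\to+\infty$, and $\Gamma^+$ the union of those trapped as $s\to-\infty$. *)

From Stdlib Require Import Reals Lra.
From Coquelicot Require Import Coquelicot.
Open Scope R_scope.

(* ------------------------------------------------------------------------
   Phase space T^*M_I, globally (no coordinate singularity at the poles).
   The sphere S^2 is embedded in R^3 as the unit sphere, and T^*S^2 is
   realised as {(w, e) in R^3 x R^3 : |w| = 1, w.e = 0}, the covector
   at w being u |-> e.u on T_w S^2 = w^perp.
   A phase-space point is z : nat -> R, only the indices 0..9 matter:
     z 0 = t,  z 1 = r,  (z 2, z 3, z 4) = w  (point of S^2),
     z 5 = xi_t, z 6 = xi_r, (z 7, z 8, z 9) = e (covector on S^2).
   Position coordinate i (i < 5) is conjugate to momentum i+5.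
   In Boyer-Lindquist terms w = (sin th cos ph, sin th sin ph, cos th),
   cos th = w_3, and xi_phi = e(d_phi) = ((e_z x w) . e) = w1 e2 - w2 e1.
   ------------------------------------------------------------------------ *)

Definition r_plus (M a : R) : R := M + sqrt (M * M - a * a).
Definition Delta (M a r : R) : R := r * r - 2 * M * r + a * a.

Definition wnorm2 (z : nat -> R) : R := z 2%nat ^ 2 + z 3%nat ^ 2 + z 4%nat ^ 2.
Definition cos2 (z : nat -> R) : R := z 4%nat ^ 2 / wnorm2 z.
Definition rho2 (a : R) (z : nat -> R) : R := z 1%nat ^ 2 + a ^ 2 * cos2 z.

(* angular momentum L = w x e; on T^*S^2, |L|^2 = |e|^2 = xi_th^2 +
   xi_ph^2 / sin^2 th and L_z = xi_phi *)
Definition Lx (z : nat -> R) : R := z 3%nat * z 9%nat - z 4%nat * z 8%nat.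
Definition Ly (z : nat -> R) : R := z 4%nat * z 7%nat - z 2%nat * z 9%nat.
Definition Lz (z : nat -> R) : R := z 2%nat * z 8%nat - z 3%nat * z 7%nat.
Definition xi_phi (z : nat -> R) : R := Lz z.

(* p(x,xi) = g^{-1}_x(xi,xi) for the Kerr metric, written out:
   rho^2 p = Delta xi_r^2 - ((r^2+a^2) xi_t + a xi_phi)^2 / Delta
             + xi_th^2 + (xi_phi + a sin^2 th xi_t)^2 / sin^2 th,
   where xi_th^2 + (xi_phi + a sin^2 th xi_t)^2/sin^2 th
       = |L|^2 + 2 a xi_t L_z + a^2 sin^2 th xi_t^2  (smooth across the axis).
   The expression is invariant under (w,e) -> (l w, e / l), so its
   Hamiltonian flow on R^10 preserves |w| = 1 and w.e = 0 and restricts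
   to the Hamiltonian flow of p on T^*M_I. *)
Definition p_kerr (M a : R) (z : nat -> R) : R :=
  let r := z 1%nat in
  let xt := z 5%nat in
  let xr := z 6%nat in
  let D := Delta M a r in
  ( D * xr ^ 2
    - ((r ^ 2 + a ^ 2) * xt + a * Lz z) ^ 2 / D
    + (Lx z ^ 2 + Ly z ^ 2 + Lz z ^ 2)
    + 2 * a * xt * Lz z
    + a ^ 2 * (1 - cos2 z) * xt ^ 2 ) / rho2 a z.

Definition upd (z : nat -> R) (i : nat) (y : R) : nat -> R :=
  fun j => if Nat.eqb j i then y else z j.
Definition dpart (P : (nat -> R) -> R) (i : nat) (z : nat -> R) : R :=
  Derive (fun y => P (upd z i y)) (z i).

Definition Hp (M a : R) (z : nat -> R) (i : nat) : R :=
  if Nat.ltb i 5 then dpart (p_kerr M a) (i + 5) z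
  else - dpart (p_kerr M a) (i - 5) z.

Definition in_char_set (M a : R) (z : nat -> R) : Prop :=
  r_plus M a < z 1%nat /\
  wnorm2 z = 1 /\
  z 2%nat * z 7%nat + z 3%nat * z 8%nat + z 4%nat * z 9%nat = 0 /\
  ~ (z 5%nat = 0 /\ z 6%nat = 0 /\ z 7%nat = 0 /\ z 8%nat = 0 /\ z 9%nat = 0) /\
  p_kerr M a z = 0.

Definition in_dom (lo hi : Rbar) (s : R) : Prop := Rbar_lt lo s /\ Rbar_lt s hi.

Definition bichar (M a : R) (lo hi : Rbar) (g : R -> nat -> R) : Prop :=
  Rbar_lt lo hi /\
  forall s, in_dom lo hi s ->
    in_char_set M a (g s) /\
    forall i, (i < 10)%nat -> is_derive (fun s' => g s' i) s (Hp M a (g s) i).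

Definition max_bichar (M a : R) (lo hi : Rbar) (g : R -> nat -> R) : Prop :=
  bichar M a lo hi g /\
  forall lo' hi' g', bichar M a lo' hi' g' ->
    Rbar_le lo' lo -> Rbar_le hi hi' ->
    (forall s i, in_dom lo hi s -> (i < 10)%nat -> g' s i = g s i) ->
    lo' = lo /\ hi' = hi.

Definition trapped_fwd (M a : R) (lo hi : Rbar) (g : R -> nat -> R) : Prop :=
  Rbar_lt lo 0 /\ hi = p_infty /\
  exists r0 R0, r_plus M a < r0 /\ r0 < R0 /\
    forall s, 0 <= s -> r0 <= g s 1%nat <= R0.
Definition trapped_bwd (M a : R) (lo hi : Rbar) (g : R -> nat -> R) : Prop :=
  Rbar_lt 0 hi /\ lo = m_infty /\
  exists r0 R0, r_plus M a < r0 /\ r0 < R0 /\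
    forall s, s <= 0 -> r0 <= g s 1%nat <= R0.

Definition on_curve (lo hi : Rbar) (g : R -> nat -> R) (z : nat -> R) : Prop :=
  exists s0, in_dom lo hi s0 /\ forall i, (i < 10)%nat -> g s0 i = z i.

Definition Gamma_minus (M a : R) (z : nat -> R) : Prop :=
  exists lo hi g, max_bichar M a lo hi g /\ trapped_fwd M a lo hi g /\ on_curve lo hi g z.
Definition Gamma_plus (M a : R) (z : nat -> R) : Prop :=
  exists lo hi g, max_bichar M a lo hi g /\ trapped_bwd M a lo hi g /\ on_curve lo hi g z.

(* ---- tangent vectors and the metric ----
   A tangent vector at the base point of z is v = (vt, vr, u) with
   u in R^3, u.w = 0 (tangent to S^2).  In BL terms
   |u|^2 = dth^2 + sin^2 th dph^2 and  sin^2 th dph(u) = (e_z x w).u.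
   g(v,v) = -(1-2Mr/rho^2) vt^2 - (4aMr/rho^2) vt (sin^2 th dph)
            + (rho^2/Delta) vr^2 + rho^2 |u|^2
            + a^2 (1 + 2Mr/rho^2) (sin^2 th dph)^2,
   which equals the BL expression in the context. *)
Definition tangent_at (z : nat -> R) (u1 u2 u3 : R) : Prop :=
  z 2%nat * u1 + z 3%nat * u2 + z 4%nat * u3 = 0.

Definition g_kerr (M a : R) (z : nat -> R) (vt vr u1 u2 u3 : R) : R :=
  let r := z 1%nat in
  let rh := rho2 a z in
  let wz := - z 3%nat * u1 + z 2%nat * u2 in
  - (1 - 2 * M * r / rh) * vt ^ 2
  - (4 * a * M * r / rh) * vt * wz
  + (rh / Delta M a r) * vr ^ 2
  + rh * (u1 ^ 2 + u2 ^ 2 + u3 ^ 2)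
  + a ^ 2 * (1 + 2 * M * r / rh) * wz ^ 2.

(* future directed timelike: g(v,v) < 0 and g(v, -grad t) < 0; since
   g(v, grad t) = dt(v) = vt, the latter is 0 < vt. *)
Definition future_timelike (M a : R) (z : nat -> R) (vt vr u1 u2 u3 : R) : Prop :=
  tangent_at z u1 u2 u3 /\ g_kerr M a z vt vr u1 u2 u3 < 0 /\ 0 < vt.

Definition pair (z : nat -> R) (vt vr u1 u2 u3 : R) : R :=
  z 5%nat * vt + z 6%nat * vr + z 7%nat * u1 + z 8%nat * u2 + z 9%nat * u3.

Definition future_pointing (M a : R) (z : nat -> R) : Prop :=
  forall vt vr u1 u2 u3, future_timelike M a z vt vr u1 u2 u3 ->
    0 < pair z vt vr u1 u2 u3.

Definition Omega_H (M a : R) : R := a / (r_plus M a ^ 2 + a ^ 2).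
Definition xi_dt (z : nat -> R) : R := z 5%nat.
Definition xi_vH (M a : R) (z : nat -> R) : R := z 5%nat + Omega_H M a * xi_phi z.

(* On the characteristic set put F = (r^2 + a^2) xi_t + a xi_phi.  The equation p = 0 reads
   F^2 = Delta^2 xi_r^2 + Delta P with P >= 0 a sum of squares, so F never vanishes.
   If F > 0, a reverse Cauchy-Schwarz inequality in a frame adapted to the metric shows that
   xi is future pointing.  If F < 0 along a trapped bicharacteristic, then xi_t and xi_phi are
   conserved and F keeps its sign; the hypothesis xi_t > 0 or xi.v_H > 0 then forces
   d(Delta xi_r)/ds to have a fixed sign, bounded away from 0 while r stays in [r0, R0].
   Since dr/ds = 2 Delta xi_r / rho^2, r must then leave [r0, R0], contradicting trapping. *)

From Stdlib Require Import Reals Lra Psatz.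
From Coquelicot Require Import Coquelicot.
Open Scope R_scope.

Lemma reverse_cauchy_schwarz (D F X p0 p1 p2 p3 q0 q1 q2 q3 : R) :
  0 < D -> 0 < F -> 0 < X ->
  F ^ 2 = p0 ^ 2 + D * (p1 ^ 2 + p2 ^ 2 + p3 ^ 2) ->
  D * q0 ^ 2 + (q1 ^ 2 + q2 ^ 2 + q3 ^ 2) < D * X ^ 2 ->
  0 < F * X + (p0 * q0 + p1 * q1 + p2 * q2 + p3 * q3).
Proof.
intros HD HF HX Hp Hq.
set (S := p0 * q0 + p1 * q1 + p2 * q2 + p3 * q3).
assert (Hlagrange : F ^ 2 * (D * q0 ^ 2 + (q1 ^ 2 + q2 ^ 2 + q3 ^ 2)) - D * S ^ 2 =
  (p0 * q1 - D * q0 * p1) ^ 2 + (p0 * q2 - D * q0 * p2) ^ 2 + (p0 * q3 - D * q0 * p3) ^ 2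
  + D * ((p1 * q2 - p2 * q1) ^ 2 + (p1 * q3 - p3 * q1) ^ 2 + (p2 * q3 - p3 * q2) ^ 2)).
{ rewrite Hp; unfold S; ring. }
assert (Hsq : F ^ 2 * (D * q0 ^ 2 + (q1 ^ 2 + q2 ^ 2 + q3 ^ 2)) < F ^ 2 * (D * X ^ 2))
  by (apply Rmult_lt_compat_l; [apply pow_lt; exact HF | nra]).
assert (HS : D * S ^ 2 < D * (F * X) ^ 2).
{ generalize (pow2_ge_0 (p0 * q1 - D * q0 * p1)) (pow2_ge_0 (p0 * q2 - D * q0 * p2))
    (pow2_ge_0 (p0 * q3 - D * q0 * p3)) (pow2_ge_0 (p1 * q2 - p2 * q1))
    (pow2_ge_0 (p1 * q3 - p3 * q1)) (pow2_ge_0 (p2 * q3 - p3 * q2)).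
  intros. replace (D * (F * X) ^ 2) with (F ^ 2 * (D * X ^ 2)) by ring. nra. }
apply Rmult_lt_reg_l in HS; [| exact HD].
assert (0 < F * X) by (apply Rmult_lt_0_compat; assumption).
nra.
Qed.

(* [(x - f)^2 D <= a^2 f^2] gives [x <= f (1 + |a| / sqrt D)], and [2 |a| sqrt D <= D + a^2]. *)
Lemma sq_deviation_bound (x f D a : R) : 0 < f -> 0 < D ->
  (x - f) ^ 2 * D <= a ^ 2 * f ^ 2 -> 2 * x * D <= f * (3 * D + a ^ 2).
Proof.
intros Hf HD Hdev.
destruct (Rle_or_lt (2 * x * D) (f * (3 * D + a ^ 2))) as [H | H]; [exact H | exfalso].
assert (H1 : 0 <= f * (D + a ^ 2)) by (generalize (pow2_ge_0 a); nra).
assert (H2 : f * (D + a ^ 2) < 2 * D * (x - f)) by lra.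
assert (H3 : (f * (D + a ^ 2)) ^ 2 < (2 * D * (x - f)) ^ 2) by nra.
assert (H4 : 4 * a ^ 2 * D <= (D + a ^ 2) ^ 2) by (generalize (pow2_ge_0 (D - a ^ 2)); nra).
assert (H5 : f ^ 2 * (4 * a ^ 2 * D) <= f ^ 2 * (D + a ^ 2) ^ 2)
  by (apply Rmult_le_compat_l; [apply pow2_ge_0 | exact H4]).
nra.
Qed.

Lemma Rdiv_le_compat (n m p q : R) : 0 < p <= q -> 0 <= m -> m <= n -> m / q <= n / p.
Proof.
intros [Hp Hpq] Hm Hmn. apply Rle_trans with (m / p); unfold Rdiv.
- apply Rmult_le_compat_l; [exact Hm | apply Rinv_le_contravar; lra].
- apply Rmult_le_compat_r; [left; apply Rinv_0_lt_compat |]; lra.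
Qed.

Lemma pow2_eq_0 (x : R) : x ^ 2 = 0 -> x = 0.
Proof. intro H. apply Rsqr_0_uniq. rewrite Rsqr_pow2. exact H. Qed.

Lemma mvt_lower_bound (f df : R -> R) (x y c : R) : x <= y ->
  (forall t, x <= t <= y -> is_derive f t (df t)) ->
  (forall t, x <= t <= y -> c <= df t) -> f x + c * (y - x) <= f y.
Proof.
intros Hxy Hd Hc. destruct Hxy as [Hxy | <-]; [| lra].
destruct (MVT_cor3 f df x y Hxy) as (t & Hxt & Hty & Heq).
- intros t Hxt Hty. apply is_derive_Reals, Hd. lra.
- rewrite Heq. assert (c <= df t) by (apply Hc; lra). nra.
Qed.

Lemma drift_escapes (x y dx dy : R -> R) (c k B : R) : 0 < c -> 0 < k ->
  (forall t, 0 <= t -> is_derive y t (dy t) /\ c <= dy t) ->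
  (forall t, 0 <= t -> is_derive x t (dx t) /\ (1 <= y t -> k <= dx t)) ->
  ~ (forall t, 0 <= t -> x t <= B).
Proof.
intros Hc Hk Hy Hx HB.
set (T := Rmax 0 ((1 - y 0) / c)).
assert (HT : 0 <= T /\ (1 - y 0) / c <= T) by (split; [apply Rmax_l | apply Rmax_r]).
assert (Hy1 : forall t, T <= t -> 1 <= y t).
{ intros t Ht.
  assert (H := mvt_lower_bound y dy 0 t c ltac:(lra)
    ltac:(intros s Hs; apply Hy; lra) ltac:(intros s Hs; apply Hy; lra)).
  assert (1 - y 0 <= c * T) by (apply (Rmult_le_reg_r (/ c)); [apply Rinv_0_lt_compat; lra |];
    replace (c * T * / c) with T by (field; lra); unfold Rdiv in HT; lra).
  nra. }
set (L := Rmax 0 ((B - x T + 1) / k)).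
assert (HL : 0 <= L /\ (B - x T + 1) / k <= L) by (split; [apply Rmax_l | apply Rmax_r]).
assert (H := mvt_lower_bound x dx T (T + L) k ltac:(lra)
  ltac:(intros s Hs; apply Hx; lra) ltac:(intros s Hs; apply Hx; [lra | apply Hy1; lra])).
assert (B - x T + 1 <= k * L) by (apply (Rmult_le_reg_r (/ k)); [apply Rinv_0_lt_compat; lra |];
  replace (k * L * / k) with L by (field; lra); unfold Rdiv in HL; lra).
assert (x (T + L) <= B) by (apply HB; lra).
replace (T + L - T) with L in H by ring. lra.
Qed.

Lemma is_derive_Rmult (f g : R -> R) (x df dg : R) : is_derive f x df -> is_derive g x dg ->
  is_derive (fun t => f t * g t) x (df * g x + f x * dg).
Proof. intros Hf Hg. apply (is_derive_mult f g x df dg Hf Hg Rmult_comm). Qed.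

Lemma is_derive_rescale (f : R -> R) (k x df : R) : is_derive f (k * x) df ->
  is_derive (fun t => f (k * t)) x (k * df).
Proof.
intro Hf. assert (Hk : is_derive (fun t : R => k * t) x k) by (auto_derive; auto; ring).
apply (is_derive_comp f (fun t => k * t) x df k Hf Hk).
Qed.

Lemma in_dom_between (lo hi : Rbar) (x y t : R) :
  in_dom lo hi x -> in_dom lo hi y -> x <= t <= y -> in_dom lo hi t.
Proof.
intros [Hx _] [_ Hy] [H1 H2]. split.
- apply Rbar_lt_le_trans with x; [exact Hx | exact H1].
- apply Rbar_le_lt_trans with y; [exact H2 | exact Hy].
Qed.

Lemma in_dom_derive_0_const (lo hi : Rbar) (f : R -> R) (x y : R) :
  (forall t, in_dom lo hi t -> is_derive f t 0) -> in_dom lo hi x -> in_dom lo hi y -> f x = f y.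
Proof.
intros Hd.
assert (Hle : forall u v, in_dom lo hi u -> in_dom lo hi v -> u <= v -> f u = f v).
{ intros u v Hu Hv Huv.
  assert (H1 := mvt_lower_bound f (fun _ => 0) u v 0 Huv
    (fun t Ht => Hd t (in_dom_between lo hi u v t Hu Hv Ht)) (fun _ _ => Rle_refl 0)).
  assert (H2 := mvt_lower_bound (fun t => - f t) (fun _ => - 0) u v 0 Huv
    (fun t Ht => is_derive_opp f t 0 (Hd t (in_dom_between lo hi u v t Hu Hv Ht)))
    (fun _ _ => Req_le _ _ (eq_sym Ropp_0))).
  simpl in H1, H2. lra. }
intros Hx Hy. destruct (Rle_or_lt x y); [apply Hle | symmetry; apply Hle]; auto; lra.
Qed.

Lemma in_dom_neg_const (lo hi : Rbar) (f : R -> R) (x y : R) :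
  (forall t, in_dom lo hi t -> continuity_pt f t) -> (forall t, in_dom lo hi t -> f t <> 0) ->
  in_dom lo hi x -> in_dom lo hi y -> f x < 0 -> f y < 0.
Proof.
intros Hc Hn Hx Hy Hfx.
destruct (Rlt_or_le (f y) 0) as [H | H]; [exact H | exfalso].
assert (Hfy : 0 < f y) by (destruct H as [H | H]; [exact H | exfalso; exact (Hn y Hy (eq_sym H))]).
destruct (Rtotal_order x y) as [Hxy | [<- | Hxy]]; [| lra |].
- destruct (Ranalysis5.IVT_interv f x y) as [t [Ht Hft]]; [| exact Hxy | exact Hfx | lra |].
  + intros t Ht. exact (Hc t (in_dom_between lo hi x y t Hx Hy Ht)).
  + exact (Hn t (in_dom_between lo hi x y t Hx Hy Ht) Hft).
- destruct (Ranalysis5.IVT_interv (fun t => - f t) y x) as [t [Ht Hft]];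
    [| exact Hxy | lra | lra |].
  + intros t Ht. apply continuity_pt_opp, Hc, (in_dom_between lo hi y x t Hy Hx Ht).
  + apply (Hn t (in_dom_between lo hi y x t Hy Hx Ht)). lra.
Qed.

(** * The Kerr exterior *)

Lemma kerr_params M a : 0 < Rabs a < M -> 0 < M /\ 0 < a ^ 2 /\ a ^ 2 < M ^ 2.
Proof.
intros [Ha HaM]. rewrite <- pow2_abs. split; [lra | split; [apply pow_lt |]; nra].
Qed.

Lemma r_plus_spec M a : 0 < Rabs a < M ->
  0 < r_plus M a - M /\ (r_plus M a - M) ^ 2 = M ^ 2 - a ^ 2.
Proof.
intro HM. destruct (kerr_params M a HM) as (HM0 & Ha & HaM).
unfold r_plus. replace (M + sqrt (M * M - a * a) - M) with (sqrt (M * M - a * a)) by ring.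
split; [apply sqrt_lt_R0; nra |].
rewrite <- Rsqr_pow2, Rsqr_sqrt; [ring | nra].
Qed.

Lemma Delta_r_plus M a r : 0 < Rabs a < M ->
  Delta M a r = (r - M) ^ 2 - (r_plus M a - M) ^ 2.
Proof. intro HM. rewrite (proj2 (r_plus_spec M a HM)). unfold Delta. ring. Qed.

Lemma Delta_pos M a r : 0 < Rabs a < M -> r_plus M a < r -> M < r /\ 0 < Delta M a r.
Proof.
intros HM Hr. rewrite (Delta_r_plus M a r HM). destruct (r_plus_spec M a HM) as [Hq _]. nra.
Qed.

Lemma Delta_le_mono M a r1 r2 : M <= r1 <= r2 -> Delta M a r1 <= Delta M a r2.
Proof. intros [H1 H2]. unfold Delta. nra. Qed.

Lemma Delta_radial_bracket_nonneg M a r : 0 < Rabs a < M -> r_plus M a < r ->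
  0 <= 4 * r * Delta M a r - (r ^ 2 - r_plus M a ^ 2) * (2 * r - 2 * M).
Proof.
intros HM Hr. rewrite (Delta_r_plus M a r HM).
destruct (r_plus_spec M a HM) as [Hq _]. destruct (kerr_params M a HM) as [HM0 _].
set (q := r_plus M a - M) in *. replace (r_plus M a) with (M + q) in * by (unfold q; ring).
set (s := r - M). replace r with (M + s) in * by (unfold s; ring).
replace (4 * (M + s) * (s ^ 2 - q ^ 2) - ((M + s) ^ 2 - (M + q) ^ 2) * (2 * (M + s) - 2 * M))
  with ((s - q) * (4 * M * q + 2 * s ^ 2 + 2 * s * q)) by ring.
apply Rmult_le_pos; nra.
Qed.

Lemma is_derive_Delta (M a : R) (f : R -> R) (x df : R) : is_derive f x df ->
  is_derive (fun t => Delta M a (f t)) x ((2 * f x - 2 * M) * df).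
Proof.
intro Hf. rewrite Rmult_comm.
apply (is_derive_comp (Delta M a) f x); [unfold Delta; auto_derive; auto; ring | exact Hf].
Qed.

(* [W] is [sin^2 th dph(u)]; [X] and [U] are the components of [v] in a frame that
   diagonalises the Kerr metric ([rho_g_frame]), and [n] those of the covector. *)
Section KerrFrame.

Variables (M a r D rho w1 w2 w3 : R).
Hypotheses (HMr : 0 <= M * r) (HD : D = r * r - 2 * M * r + a * a) (HD_pos : 0 < D)
  (Hw : w1 ^ 2 + w2 ^ 2 + w3 ^ 2 = 1) (Hrho : rho = r ^ 2 + a ^ 2 * w3 ^ 2) (Hrho_pos : 0 < rho).

Variables (vt vr u1 u2 u3 : R).
Let W := - w2 * u1 + w1 * u2.
Let X := vt - a * W.
Let U1 := rho * u1 + a * X * w2.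
Let U2 := rho * u2 - a * X * w1.
Let U3 := rho * u3.
Let gv := - (1 - 2 * M * r / rho) * vt ^ 2 - (4 * a * M * r / rho) * vt * W
  + (rho / D) * vr ^ 2 + rho * (u1 ^ 2 + u2 ^ 2 + u3 ^ 2)
  + a ^ 2 * (1 + 2 * M * r / rho) * W ^ 2.

Lemma rho_g_frame : rho * gv = - D * X ^ 2 + rho ^ 2 * vr ^ 2 / D + (U1 ^ 2 + U2 ^ 2 + U3 ^ 2).
Proof.
assert (Hw3 : w3 ^ 2 = 1 - w1 ^ 2 - w2 ^ 2) by lra.
assert (Hrho0 : rho <> 0) by lra.
assert (HD0 : D <> 0) by lra.
unfold gv, U1, U2, U3, X, W. rewrite HD in HD0 |- *. rewrite Hrho, Hw3 in Hrho0 |- *.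
field. split; assumption.
Qed.

Lemma frame_timelike : gv < 0 -> rho ^ 2 * vr ^ 2 / D + (U1 ^ 2 + U2 ^ 2 + U3 ^ 2) < D * X ^ 2.
Proof. intro Hg. generalize rho_g_frame. nra. Qed.

Lemma frame_time_pos : gv < 0 -> 0 < vt -> 0 < X.
Proof.
intros Hg Hvt. assert (HU := frame_timelike Hg).
assert (Hvr : 0 <= rho ^ 2 * vr ^ 2 / D)
  by (apply Rmult_le_pos; [nra | left; apply Rinv_0_lt_compat; lra]).
assert (HkU : a * (- w2 * U1 + w1 * U2) = rho * vt - (r ^ 2 + a ^ 2) * X).
{ unfold U1, U2, X, W. rewrite Hrho. replace (w3 ^ 2) with (1 - w1 ^ 2 - w2 ^ 2) by lra. ring. }
assert (Hproj : (- w2 * U1 + w1 * U2) ^ 2 <= U1 ^ 2 + U2 ^ 2 + U3 ^ 2).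
{ assert (E : (w1 ^ 2 + w2 ^ 2) * (U1 ^ 2 + U2 ^ 2) - (- w2 * U1 + w1 * U2) ^ 2
            = (w1 * U1 + w2 * U2) ^ 2) by ring.
  generalize (pow2_ge_0 w3) (pow2_ge_0 (w1 * U1 + w2 * U2)) (pow2_ge_0 U1) (pow2_ge_0 U2)
             (pow2_ge_0 U3).
  nra. }
destruct (Rle_or_lt X 0) as [HX | HX]; [exfalso | exact HX].
assert (Hb : a ^ 2 * D <= (r ^ 2 + a ^ 2) ^ 2) by (rewrite HD; nra).
assert (Hlt : (r ^ 2 + a ^ 2) * (- X) < a * (- w2 * U1 + w1 * U2)) by (rewrite HkU; nra).
assert ((a * (- w2 * U1 + w1 * U2)) ^ 2 <= a ^ 2 * D * X ^ 2).
{ replace ((a * (- w2 * U1 + w1 * U2)) ^ 2) with (a ^ 2 * (- w2 * U1 + w1 * U2) ^ 2) by ring.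
  generalize (pow2_ge_0 a). nra. }
assert (0 <= (r ^ 2 + a ^ 2) * (- X)) by nra.
nra.
Qed.

Variables (E xr e1 e2 e3 F : R).
Hypothesis HF : F = (r ^ 2 + a ^ 2) * E + a * (w1 * e2 - w2 * e1).
Let n1 := e1 - a * E * w2.
Let n2 := e2 + a * E * w1.

Lemma rho_pair_frame : rho * (E * vt + xr * vr + e1 * u1 + e2 * u2 + e3 * u3)
  = F * X + (D * xr * (rho * vr / D) + n1 * U1 + n2 * U2 + e3 * U3).
Proof.
unfold U1, U2, U3, n1, n2, X, W. rewrite HF, Hrho.
replace (w3 ^ 2) with (1 - w1 ^ 2 - w2 ^ 2) by lra. field. lra.
Qed.

Lemma null_covector_pairing_pos :
  F ^ 2 = D ^ 2 * xr ^ 2 + D * (n1 ^ 2 + n2 ^ 2 + e3 ^ 2) -> 0 < F ->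
  gv < 0 -> 0 < vt -> 0 < E * vt + xr * vr + e1 * u1 + e2 * u2 + e3 * u3.
Proof.
intros Hnull HFpos Hg Hvt.
apply (Rmult_lt_reg_l rho); [exact Hrho_pos |]. rewrite Rmult_0_r, rho_pair_frame.
apply reverse_cauchy_schwarz with D;
  [exact HD_pos | exact HFpos | exact (frame_time_pos Hg Hvt) | |].
- rewrite Hnull. ring.
- assert (HU := frame_timelike Hg).
  replace (D * (rho * vr / D) ^ 2) with (rho ^ 2 * vr ^ 2 / D) by (field; lra). exact HU.
Qed.

End KerrFrame.

(** * The Hamiltonian *)

Definition kerr_F (a : R) (z : nat -> R) : R := (z 1%nat ^ 2 + a ^ 2) * z 5%nat + a * Lz z.

Definition kerr_P (a : R) (z : nat -> R) : R :=
  Lx z ^ 2 + Ly z ^ 2 + Lz z ^ 2 + 2 * a * z 5%nat * Lz z + a ^ 2 * (1 - cos2 z) * z 5%nat ^ 2.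

Definition kerr_N (M a : R) (z : nat -> R) : R :=
  Delta M a (z 1%nat) * z 6%nat ^ 2 - kerr_F a z ^ 2 / Delta M a (z 1%nat) + kerr_P a z.

Definition p_kerr_regular (M a : R) (z : nat -> R) : Prop :=
  Delta M a (z 1%nat) <> 0 /\ wnorm2 z <> 0 /\ rho2 a z <> 0.

Ltac nonzero_from_regular :=
  match goal with
  | |- _ /\ _ => split; nonzero_from_regular
  | |- True => exact I
  | |- _ <> 0 =>
      let Hc := fresh in intro Hc;
      match goal with
      | H : ?Y <> 0 |- _ => apply H; rewrite <- Hc; field; nonzero_from_regular
      end
  end.

Lemma rho2_wnorm2_neq0 a z : wnorm2 z <> 0 -> rho2 a z <> 0 ->
  z 1%nat ^ 2 * wnorm2 z + a ^ 2 * z 4%nat ^ 2 <> 0.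
Proof.
intros Hw Hr. replace (z 1%nat ^ 2 * wnorm2 z + a ^ 2 * z 4%nat ^ 2) with (rho2 a z * wnorm2 z)
  by (unfold rho2, cos2; field; exact Hw).
apply Rmult_integral_contrapositive_currified; assumption.
Qed.

Ltac dpart_p_kerr :=
  let HD := fresh in let Hw := fresh in let Hr := fresh in
  intros [HD [Hw Hr]]; generalize (rho2_wnorm2_neq0 _ _ Hw Hr); intro;
  unfold dpart; apply is_derive_unique;
  unfold kerr_N, kerr_P, kerr_F, p_kerr, rho2, cos2, wnorm2, upd, Lx, Ly, Lz, Delta in *; simpl;
  auto_derive; [nonzero_from_regular | field; nonzero_from_regular].

Lemma dpart_p_kerr_r M a z : p_kerr_regular M a z ->
  dpart (p_kerr M a) 1 z =
  ((2 * z 1%nat - 2 * M) * z 6%nat ^ 2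
    - (2 * kerr_F a z * (2 * z 1%nat * z 5%nat) * Delta M a (z 1%nat)
       - kerr_F a z ^ 2 * (2 * z 1%nat - 2 * M)) / Delta M a (z 1%nat) ^ 2) / rho2 a z
  - kerr_N M a z * (2 * z 1%nat) / rho2 a z ^ 2.
Proof. dpart_p_kerr. Qed.

Lemma dpart_p_kerr_xi_r M a z : p_kerr_regular M a z ->
  dpart (p_kerr M a) 6 z = 2 * Delta M a (z 1%nat) * z 6%nat / rho2 a z.
Proof. dpart_p_kerr. Qed.

Lemma dpart_p_kerr_t M a z : dpart (p_kerr M a) 0 z = 0.
Proof.
unfold dpart. apply is_derive_unique.
apply is_derive_ext with (fun _ => p_kerr M a z); [reflexivity | auto_derive; auto].
Qed.

(* Derivative of [p_kerr] along a variation of the angular variables moving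
   [Lx, Ly, Lz, cos2] at the rates [dLx, dLy, dLz, dc]. *)
Definition dp_angular (M a : R) (z : nat -> R) (dLx dLy dLz dc : R) : R :=
  (- 2 * kerr_F a z * a * dLz / Delta M a (z 1%nat) + 2 * Lx z * dLx + 2 * Ly z * dLy
   + 2 * Lz z * dLz + 2 * a * z 5%nat * dLz - a ^ 2 * z 5%nat ^ 2 * dc) / rho2 a z
  - kerr_N M a z * a ^ 2 * dc / rho2 a z ^ 2.

Lemma dpart_p_kerr_w1 M a z : p_kerr_regular M a z ->
  dpart (p_kerr M a) 2 z =
  dp_angular M a z 0 (- z 9%nat) (z 8%nat) (- 2 * z 2%nat * z 4%nat ^ 2 / wnorm2 z ^ 2).
Proof. unfold dp_angular. dpart_p_kerr. Qed.

Lemma dpart_p_kerr_w2 M a z : p_kerr_regular M a z ->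
  dpart (p_kerr M a) 3 z =
  dp_angular M a z (z 9%nat) 0 (- z 7%nat) (- 2 * z 3%nat * z 4%nat ^ 2 / wnorm2 z ^ 2).
Proof. unfold dp_angular. dpart_p_kerr. Qed.

Lemma dpart_p_kerr_e1 M a z : p_kerr_regular M a z ->
  dpart (p_kerr M a) 7 z = dp_angular M a z 0 (z 4%nat) (- z 3%nat) 0.
Proof. unfold dp_angular. dpart_p_kerr. Qed.

Lemma dpart_p_kerr_e2 M a z : p_kerr_regular M a z ->
  dpart (p_kerr M a) 8 z = dp_angular M a z (- z 4%nat) 0 (z 2%nat) 0.
Proof. unfold dp_angular. dpart_p_kerr. Qed.

(* [{Lz, p} = 0]: [p] is invariant under rotations about the axis. *)
Lemma poisson_Lz_p_kerr M a z : p_kerr_regular M a z ->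
  z 8%nat * dpart (p_kerr M a) 7 z - z 2%nat * dpart (p_kerr M a) 3 z
  - z 7%nat * dpart (p_kerr M a) 8 z + z 3%nat * dpart (p_kerr M a) 2 z = 0.
Proof.
intro Hreg.
rewrite dpart_p_kerr_e1, dpart_p_kerr_w2, dpart_p_kerr_e2, dpart_p_kerr_w1 by exact Hreg.
destruct Hreg as [HD [Hw Hr]].
unfold dp_angular, Lx, Ly, Lz. field. repeat split; assumption.
Qed.

Definition kerr_F_horizon (M a : R) (z : nat -> R) : R :=
  (r_plus M a ^ 2 + a ^ 2) * z 5%nat + a * Lz z.

(* The value of [d (Delta xi_r) / ds] along the flow, on the characteristic set. *)
Definition radial_force (M a : R) (z : nat -> R) : R :=
  (4 * z 1%nat * z 5%nat * kerr_F a z - kerr_P a z * (2 * z 1%nat - 2 * M)) / rho2 a z.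

(* [xi_phi + a sin^2 th xi_t], whose square over [sin^2 th] is part of [kerr_P]. *)
Definition angular_twist (a : R) (z : nat -> R) : R := Lz z + a * (1 - z 4%nat ^ 2) * z 5%nat.

Lemma kerr_F_split M a z :
  kerr_F a z = kerr_F_horizon M a z + z 5%nat * (z 1%nat ^ 2 - r_plus M a ^ 2).
Proof. unfold kerr_F, kerr_F_horizon. ring. Qed.

Lemma p_kerr_N M a z : p_kerr M a z = kerr_N M a z / rho2 a z.
Proof. unfold p_kerr, kerr_N, kerr_P, kerr_F. cbv zeta. unfold Rdiv. ring. Qed.

Lemma kerr_F_horizon_xi_vH M a z : 0 < Rabs a < M ->
  kerr_F_horizon M a z = (r_plus M a ^ 2 + a ^ 2) * xi_vH M a z.
Proof.
intro HM. destruct (kerr_params M a HM) as (_ & Ha & _).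
unfold kerr_F_horizon, xi_vH, Omega_H, xi_phi. field. nra.
Qed.

(** * Points of the characteristic set *)

Section CharacteristicPoint.

Variables (M a : R) (z : nat -> R).
Hypotheses (HM : 0 < Rabs a < M) (Hz : in_char_set M a z).

Lemma char_Delta_pos : M < z 1%nat /\ 0 < Delta M a (z 1%nat).
Proof. apply Delta_pos; [exact HM | apply Hz]. Qed.

Lemma char_wnorm2 : z 2%nat ^ 2 + z 3%nat ^ 2 + z 4%nat ^ 2 = 1.
Proof. apply Hz. Qed.

Lemma char_rho2 : rho2 a z = z 1%nat ^ 2 + a ^ 2 * z 4%nat ^ 2.
Proof. unfold rho2, cos2. rewrite (proj1 (proj2 Hz)). unfold Rdiv. rewrite Rinv_1. ring. Qed.

Lemma char_rho2_bounds : z 1%nat ^ 2 <= rho2 a z <= z 1%nat ^ 2 + a ^ 2.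
Proof.
rewrite char_rho2. generalize char_wnorm2 (pow2_ge_0 a) (pow2_ge_0 (z 2%nat))
  (pow2_ge_0 (z 3%nat)) (pow2_ge_0 (z 4%nat)). intros. split; nra.
Qed.

Lemma char_rho2_pos : 0 < rho2 a z.
Proof.
destruct char_Delta_pos as [Hr _]. destruct (kerr_params M a HM) as [HM0 _].
generalize char_rho2_bounds. nra.
Qed.

Lemma char_regular : p_kerr_regular M a z.
Proof.
split; [apply Rgt_not_eq, char_Delta_pos |].
split; [unfold wnorm2; rewrite char_wnorm2; lra | apply Rgt_not_eq, char_rho2_pos].
Qed.

Lemma char_N : kerr_N M a z = 0.
Proof.
assert (Hp : p_kerr M a z = 0) by apply Hz.
rewrite p_kerr_N in Hp. apply (Rmult_eq_reg_r (/ rho2 a z)).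
- rewrite Rmult_0_l. exact Hp.
- apply Rinv_neq_0_compat, Rgt_not_eq, char_rho2_pos.
Qed.

Lemma char_P_sum_sq : kerr_P a z =
  (z 7%nat - a * z 5%nat * z 3%nat) ^ 2 + (z 8%nat + a * z 5%nat * z 2%nat) ^ 2 + z 9%nat ^ 2.
Proof.
assert (Hwe : z 2%nat * z 7%nat + z 3%nat * z 8%nat + z 4%nat * z 9%nat = 0) by apply Hz.
assert (Hcos : cos2 z = z 4%nat ^ 2) by (unfold cos2; rewrite (proj1 (proj2 Hz)); field).
assert (HL : Lx z ^ 2 + Ly z ^ 2 + Lz z ^ 2 =
  (z 2%nat ^ 2 + z 3%nat ^ 2 + z 4%nat ^ 2) * (z 7%nat ^ 2 + z 8%nat ^ 2 + z 9%nat ^ 2)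
  - (z 2%nat * z 7%nat + z 3%nat * z 8%nat + z 4%nat * z 9%nat) ^ 2)
  by (unfold Lx, Ly, Lz; ring).
unfold kerr_P. rewrite Hcos, HL, char_wnorm2, Hwe.
replace (1 - z 4%nat ^ 2) with (z 2%nat ^ 2 + z 3%nat ^ 2) by (generalize char_wnorm2; lra).
unfold Lz. ring.
Qed.

Lemma char_P_nonneg : 0 <= kerr_P a z.
Proof.
rewrite char_P_sum_sq.
generalize (pow2_ge_0 (z 7%nat - a * z 5%nat * z 3%nat))
  (pow2_ge_0 (z 8%nat + a * z 5%nat * z 2%nat)) (pow2_ge_0 (z 9%nat)). lra.
Qed.

Lemma char_null_relation :
  kerr_F a z ^ 2 = Delta M a (z 1%nat) ^ 2 * z 6%nat ^ 2 + Delta M a (z 1%nat) * kerr_P a z.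
Proof.
assert (HD := proj2 char_Delta_pos). generalize char_N. unfold kerr_N. intro HN.
replace (kerr_F a z ^ 2) with (Delta M a (z 1%nat) * (kerr_F a z ^ 2 / Delta M a (z 1%nat)))
  by (field; lra).
replace (kerr_F a z ^ 2 / Delta M a (z 1%nat)) with
  (Delta M a (z 1%nat) * z 6%nat ^ 2 + kerr_P a z) by lra.
ring.
Qed.

Lemma char_F_neq0 : kerr_F a z <> 0.
Proof.
intro HF.
assert (HD := proj2 char_Delta_pos).
assert (Hnull := char_null_relation). rewrite HF in Hnull.
assert (HP := char_P_nonneg).
assert (Hxr : z 6%nat = 0).
{ assert (0 < Delta M a (z 1%nat) ^ 2) by (apply pow_lt; exact HD).
  assert (0 <= Delta M a (z 1%nat) * kerr_P a z) by (apply Rmult_le_pos; lra).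
  generalize (pow2_ge_0 (z 6%nat)); intro.
  apply pow2_eq_0. nra. }
assert (HP0 : kerr_P a z = 0) by nra.
rewrite char_P_sum_sq in HP0.
generalize (pow2_ge_0 (z 7%nat - a * z 5%nat * z 3%nat))
  (pow2_ge_0 (z 8%nat + a * z 5%nat * z 2%nat)) (pow2_ge_0 (z 9%nat)); intros.
assert (H7 : z 7%nat = a * z 5%nat * z 3%nat).
{ apply Rminus_diag_uniq, pow2_eq_0. lra. }
assert (H8 : z 8%nat = - (a * z 5%nat * z 2%nat)).
{ apply Rminus_diag_uniq, pow2_eq_0. replace (z 8%nat - - (a * z 5%nat * z 2%nat)) with
    (z 8%nat + a * z 5%nat * z 2%nat) by ring. lra. }
assert (H9 : z 9%nat = 0) by (apply pow2_eq_0; lra).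
assert (HFE : kerr_F a z = z 5%nat * rho2 a z).
{ unfold kerr_F, Lz. rewrite H7, H8, char_rho2.
  replace (z 4%nat ^ 2) with (1 - z 2%nat ^ 2 - z 3%nat ^ 2) by (generalize char_wnorm2; lra).
  ring. }
assert (H5 : z 5%nat = 0) by (generalize char_rho2_pos; rewrite HF in HFE; nra).
apply (proj1 (proj2 (proj2 (proj2 Hz)))).
rewrite H7, H8, H9, H5. repeat split; ring || exact Hxr.
Qed.

Lemma char_future_pointing : 0 < kerr_F a z -> future_pointing M a z.
Proof.
intros HF vt vr u1 u2 u3 [_ [Hg Hvt]].
destruct (kerr_params M a HM) as [HM0 _]. destruct char_Delta_pos as [Hr HD].
unfold pair.
apply (null_covector_pairing_pos M a (z 1%nat) (Delta M a (z 1%nat)) (rho2 a z)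
  (z 2%nat) (z 3%nat) (z 4%nat)) with (F := kerr_F a z); try assumption.
- nra.
- unfold Delta; ring.
- exact char_wnorm2.
- exact char_rho2.
- exact char_rho2_pos.
- unfold kerr_F, Lz; ring.
- rewrite char_null_relation, char_P_sum_sq. ring.
Qed.

Lemma char_twist_eq : a * angular_twist a z = kerr_F a z - rho2 a z * z 5%nat.
Proof.
rewrite char_rho2. unfold angular_twist, kerr_F. ring.
Qed.

Lemma char_twist_sq_le : angular_twist a z ^ 2 <= kerr_P a z.
Proof.
rewrite char_P_sum_sq. assert (Hw := char_wnorm2).
set (n1 := z 7%nat - a * z 5%nat * z 3%nat).
set (n2 := z 8%nat + a * z 5%nat * z 2%nat).
assert (Ht : angular_twist a z = - z 3%nat * n1 + z 2%nat * n2).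
{ unfold angular_twist, n1, n2, Lz.
  replace (1 - z 4%nat ^ 2) with (z 2%nat ^ 2 + z 3%nat ^ 2) by lra. ring. }
rewrite Ht.
assert (E : (z 2%nat ^ 2 + z 3%nat ^ 2) * (n1 ^ 2 + n2 ^ 2) - (- z 3%nat * n1 + z 2%nat * n2) ^ 2
  = (z 2%nat * n1 + z 3%nat * n2) ^ 2) by ring.
generalize (pow2_ge_0 (z 2%nat * n1 + z 3%nat * n2)) (pow2_ge_0 (z 4%nat))
  (pow2_ge_0 n1) (pow2_ge_0 n2) (pow2_ge_0 (z 9%nat)).
nra.
Qed.

Lemma char_Delta_rho2_radial_force_ge : z 5%nat < 0 -> kerr_F a z < 0 ->
  0 < kerr_F_horizon M a z ->
  - kerr_F a z * kerr_F_horizon M a z * (2 * z 1%nat - 2 * M)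
    <= Delta M a (z 1%nat) * (rho2 a z * radial_force M a z).
Proof.
intros HE HF HG.
destruct char_Delta_pos as [HrM HD].
assert (Hbr := Delta_radial_bracket_nonneg M a (z 1%nat) HM ltac:(apply Hz)).
assert (HFG := kerr_F_split M a z).
assert (Hnull := char_null_relation).
assert (Hrho0 := char_rho2_pos).
set (D := Delta M a (z 1%nat)) in *. set (G := kerr_F_horizon M a z) in *.
set (B := 4 * z 1%nat * D - (z 1%nat ^ 2 - r_plus M a ^ 2) * (2 * z 1%nat - 2 * M)) in *.
assert (Hsplit : D * (rho2 a z * radial_force M a z)
  = kerr_F a z * (z 5%nat * B - G * (2 * z 1%nat - 2 * M))
    + (kerr_F a z ^ 2 - D * kerr_P a z) * (2 * z 1%nat - 2 * M)).
{ replace G with (kerr_F a z - z 5%nat * (z 1%nat ^ 2 - r_plus M a ^ 2)) by lra.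
  unfold radial_force, B. field. lra. }
assert (0 <= (kerr_F a z ^ 2 - D * kerr_P a z) * (2 * z 1%nat - 2 * M)).
{ apply Rmult_le_pos; [| lra]. rewrite Hnull. generalize (pow2_ge_0 (D * z 6%nat)). nra. }
assert (z 5%nat * B <= 0) by nra.
assert (0 <= kerr_F a z * (z 5%nat * B)) by nra.
nra.
Qed.

Variables (r0 R0 : R).
Hypotheses (Hr0 : r_plus M a < r0) (Hr : r0 <= z 1%nat <= R0).

Lemma char_radial_force_le : 0 < z 5%nat -> kerr_F a z < 0 ->
  radial_force M a z <= - ((r0 ^ 2 * z 5%nat) ^ 2 * (2 * (r0 - M)) / (a ^ 2 * (R0 ^ 2 + a ^ 2))).
Proof.
intros HE HF.
destruct (kerr_params M a HM) as (HM0 & Ha & _).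
assert (Ha0 : a <> 0) by (intro Ha0; rewrite Ha0 in Ha; lra).
assert (HrM : M < r0) by (destruct (Delta_pos M a r0 HM Hr0); lra).
assert (HQ : 0 < R0 ^ 2 + a ^ 2) by nra.
assert (Hrho := char_rho2_bounds).
assert (Hrr : r0 ^ 2 <= rho2 a z) by nra.
assert (HaT : a * angular_twist a z <= - (r0 ^ 2 * z 5%nat)) by (rewrite char_twist_eq; nra).
assert (HP : (r0 ^ 2 * z 5%nat) ^ 2 / a ^ 2 <= kerr_P a z).
{ apply (Rmult_le_reg_l (a ^ 2)); [exact Ha |].
  replace (a ^ 2 * ((r0 ^ 2 * z 5%nat) ^ 2 / a ^ 2)) with ((r0 ^ 2 * z 5%nat) ^ 2)
    by (field; exact Ha0).
  assert (0 < r0 ^ 2 * z 5%nat) by (apply Rmult_lt_0_compat; [apply pow_lt |]; lra).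
  assert (Hsq : (r0 ^ 2 * z 5%nat) ^ 2 <= a ^ 2 * angular_twist a z ^ 2) by nra.
  apply Rle_trans with (a ^ 2 * angular_twist a z ^ 2); [lra |].
  apply Rmult_le_compat_l; [apply pow2_ge_0 | apply char_twist_sq_le]. }
assert (HC : 0 <= (r0 ^ 2 * z 5%nat) ^ 2 / a ^ 2 * (2 * (r0 - M))).
{ apply Rmult_le_pos; [| lra]. unfold Rdiv. apply Rmult_le_pos; [apply pow2_ge_0 |].
  left; apply Rinv_0_lt_compat; exact Ha. }
replace ((r0 ^ 2 * z 5%nat) ^ 2 * (2 * (r0 - M)) / (a ^ 2 * (R0 ^ 2 + a ^ 2))) with
  ((r0 ^ 2 * z 5%nat) ^ 2 / a ^ 2 * (2 * (r0 - M)) / (R0 ^ 2 + a ^ 2))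
  by (field; split; [apply Rgt_not_eq; exact HQ | exact Ha0]).
assert (Hnum : (r0 ^ 2 * z 5%nat) ^ 2 / a ^ 2 * (2 * (r0 - M))
  <= - (4 * z 1%nat * z 5%nat * kerr_F a z - kerr_P a z * (2 * z 1%nat - 2 * M))).
{ assert (H1 : 0 <= z 1%nat * z 5%nat) by nra.
  assert (H2 : z 1%nat * z 5%nat * kerr_F a z <= 0) by nra.
  assert (H3 : (r0 ^ 2 * z 5%nat) ^ 2 / a ^ 2 * (2 * (r0 - M)) <= kerr_P a z * (2 * (r0 - M)))
    by (apply Rmult_le_compat_r; lra).
  assert (H4 : kerr_P a z * (2 * (r0 - M)) <= kerr_P a z * (2 * z 1%nat - 2 * M))
    by (apply Rmult_le_compat_l; [apply char_P_nonneg | lra]).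
  lra. }
assert (Hrho' : 0 < rho2 a z <= R0 ^ 2 + a ^ 2) by (split; [apply char_rho2_pos | nra]).
assert (H := Rdiv_le_compat _ _ _ _ Hrho' HC Hnum).
unfold radial_force, Rdiv in *. lra.
Qed.

Lemma char_F_lower_bound : z 5%nat < 0 -> kerr_F a z < 0 ->
  2 * r0 ^ 2 * (- z 5%nat) * Delta M a r0 / (3 * Delta M a R0 + a ^ 2) <= - kerr_F a z.
Proof.
intros HE HF.
destruct (Delta_pos M a r0 HM Hr0) as [HrM HD0].
destruct char_Delta_pos as [_ HD].
assert (HD0r : Delta M a r0 <= Delta M a (z 1%nat)) by (apply Delta_le_mono; lra).
assert (HDR : Delta M a (z 1%nat) <= Delta M a R0) by (apply Delta_le_mono; lra).
assert (Hrho := char_rho2_bounds).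
assert (HDP : Delta M a (z 1%nat) * kerr_P a z <= kerr_F a z ^ 2).
{ rewrite char_null_relation. generalize (pow2_ge_0 (Delta M a (z 1%nat) * z 6%nat)). nra. }
assert (Hdev : (rho2 a z * (- z 5%nat) - (- kerr_F a z)) ^ 2 * Delta M a (z 1%nat)
               <= a ^ 2 * (- kerr_F a z) ^ 2).
{ replace (rho2 a z * (- z 5%nat) - (- kerr_F a z)) with (a * angular_twist a z)
    by (rewrite char_twist_eq; ring).
  assert (HT : angular_twist a z ^ 2 * Delta M a (z 1%nat) <= kerr_P a z * Delta M a (z 1%nat))
    by (apply Rmult_le_compat_r; [lra | apply char_twist_sq_le]).
  replace ((- kerr_F a z) ^ 2) with (kerr_F a z ^ 2) by ring.
  generalize (pow2_ge_0 a). nra. }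
assert (Hbound := sq_deviation_bound _ (- kerr_F a z) _ a ltac:(lra) HD Hdev).
assert (HK : 0 < 3 * Delta M a R0 + a ^ 2) by (generalize (pow2_ge_0 a); lra).
apply (Rmult_le_reg_r (3 * Delta M a R0 + a ^ 2)); [exact HK |].
unfold Rdiv. rewrite Rmult_assoc, Rinv_l, Rmult_1_r by lra.
assert (0 <= r0 ^ 2 * (- z 5%nat)) by (generalize (pow2_ge_0 r0); nra).
assert (Hrr : r0 ^ 2 <= rho2 a z) by (destruct (kerr_params M a HM) as [HM0 _]; nra).
assert (r0 ^ 2 * (- z 5%nat) <= rho2 a z * (- z 5%nat)) by (apply Rmult_le_compat_r; lra).
assert (0 <= r0 ^ 2 * (- z 5%nat) * Delta M a r0) by nra.
nra.
Qed.

Lemma char_radial_force_ge : z 5%nat < 0 -> kerr_F a z < 0 -> 0 < kerr_F_horizon M a z ->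
  2 * r0 ^ 2 * (- z 5%nat) * Delta M a r0 / (3 * Delta M a R0 + a ^ 2) * kerr_F_horizon M a z
    * (2 * (r0 - M)) / (Delta M a R0 * (R0 ^ 2 + a ^ 2)) <= radial_force M a z.
Proof.
intros HE HF HG.
assert (Hfm := char_F_lower_bound HE HF).
assert (Hkey := char_Delta_rho2_radial_force_ge HE HF HG).
set (fm := 2 * r0 ^ 2 * (- z 5%nat) * Delta M a r0 / (3 * Delta M a R0 + a ^ 2)) in *.
set (G := kerr_F_horizon M a z) in *.
destruct (kerr_params M a HM) as (HM0 & Ha & _).
destruct (Delta_pos M a r0 HM Hr0) as [HrM HD0].
destruct char_Delta_pos as [_ HD].
assert (HDR : Delta M a (z 1%nat) <= Delta M a R0) by (apply Delta_le_mono; lra).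
assert (Hrho := char_rho2_bounds). assert (Hrho0 := char_rho2_pos).
assert (Hfm0 : 0 <= fm).
{ unfold fm, Rdiv. apply Rmult_le_pos; [| left; apply Rinv_0_lt_compat; lra].
  generalize (pow2_ge_0 r0). intro. apply Rmult_le_pos; nra. }
assert (HX : 0 <= fm * G * (2 * (r0 - M))) by (apply Rmult_le_pos; [apply Rmult_le_pos |]; lra).
assert (Hlow : fm * G * (2 * (r0 - M)) <= Delta M a (z 1%nat) * (rho2 a z * radial_force M a z)).
{ apply Rle_trans with (- kerr_F a z * G * (2 * z 1%nat - 2 * M)); [| exact Hkey].
  apply Rmult_le_compat; try nra. }
assert (Hrf : 0 <= radial_force M a z).
{ destruct (Rle_or_lt 0 (radial_force M a z)) as [H | H]; [exact H |].
  assert (0 < Delta M a (z 1%nat) * rho2 a z) by nra. nra. }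
assert (HQ : 0 < Delta M a R0 * (R0 ^ 2 + a ^ 2)) by nra.
unfold Rdiv. apply (Rmult_le_reg_r (Delta M a R0 * (R0 ^ 2 + a ^ 2))); [exact HQ |].
rewrite Rmult_assoc, Rinv_l, Rmult_1_r by lra.
apply Rle_trans with (1 := Hlow).
rewrite (Rmult_comm (radial_force M a z)), <- Rmult_assoc.
apply Rmult_le_compat_r; [exact Hrf |]. apply Rmult_le_compat; nra.
Qed.

End CharacteristicPoint.

Lemma char_data_agree M a z z' : (forall i, (i < 10)%nat -> z' i = z i) ->
  in_char_set M a z' -> in_char_set M a z /\ kerr_F a z' = kerr_F a z /\
  z' 5%nat = z 5%nat /\ kerr_F_horizon M a z' = kerr_F_horizon M a z.
Proof.
intros H Hz.
unfold kerr_F, kerr_F_horizon, in_char_set, p_kerr, rho2, cos2, wnorm2, Lx, Ly, Lz, Delta in *.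
rewrite !H in Hz by lia. rewrite !H by lia.
split; [exact Hz | repeat split].
Qed.

(** * Along a bicharacteristic *)

Section Bicharacteristic.

Variables (M a : R) (lo hi : Rbar) (g : R -> nat -> R).
Hypotheses (HM : 0 < Rabs a < M) (Hb : bichar M a lo hi g).

Lemma bichar_char s : in_dom lo hi s -> in_char_set M a (g s).
Proof. intro Hs. apply (proj2 Hb s Hs). Qed.

Lemma bichar_derive s i : in_dom lo hi s -> (i < 10)%nat ->
  is_derive (fun t => g t i) s (Hp M a (g s) i).
Proof. intro Hs. apply (proj2 Hb s Hs). Qed.

Lemma bichar_derive_r s : in_dom lo hi s ->
  is_derive (fun t => g t 1%nat) s (2 * Delta M a (g s 1%nat) * g s 6%nat / rho2 a (g s)).
Proof.
intro Hs. rewrite <- dpart_p_kerr_xi_r by exact (char_regular M a _ HM (bichar_char s Hs)).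
apply (bichar_derive s 1); [exact Hs | lia].
Qed.

Lemma bichar_derive_Delta_xi_r s : in_dom lo hi s ->
  is_derive (fun t => Delta M a (g t 1%nat) * g t 6%nat) s (radial_force M a (g s)).
Proof.
intro Hs. assert (Hz := bichar_char s Hs).
assert (H := is_derive_Rmult _ _ s _ _ (is_derive_Delta M a _ s _ (bichar_derive_r s Hs))
  (bichar_derive s 6 Hs ltac:(lia))).
change (Hp M a (g s) 6) with (- dpart (p_kerr M a) 1 (g s)) in H.
rewrite dpart_p_kerr_r, (char_N M a _ HM Hz) in H by exact (char_regular M a _ HM Hz).
match type of H with is_derive _ _ ?d => replace (radial_force M a (g s)) with d; [exact H |] end.
assert (HD := proj2 (char_Delta_pos M a _ HM Hz)). assert (Hr := char_rho2_pos M a _ HM Hz).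
unfold radial_force. rewrite (char_null_relation M a _ HM Hz). field. split; lra.
Qed.

Lemma bichar_derive_xi_t s : in_dom lo hi s -> is_derive (fun t => g t 5%nat) s 0.
Proof.
intro Hs. replace 0 with (Hp M a (g s) 5); [apply (bichar_derive s 5); [exact Hs | lia] |].
change (Hp M a (g s) 5) with (- dpart (p_kerr M a) 0 (g s)). rewrite dpart_p_kerr_t. ring.
Qed.

Lemma bichar_derive_Lz s : in_dom lo hi s -> is_derive (fun t => Lz (g t)) s 0.
Proof.
intro Hs. unfold Lz.
assert (H := is_derive_minus _ _ s _ _
  (is_derive_Rmult _ _ s _ _ (bichar_derive s 2 Hs ltac:(lia)) (bichar_derive s 8 Hs ltac:(lia)))
  (is_derive_Rmult _ _ s _ _ (bichar_derive s 3 Hs ltac:(lia)) (bichar_derive s 7 Hs ltac:(lia)))).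
match type of H with is_derive _ _ ?d => replace 0 with d; [exact H |] end.
change (Hp M a (g s) 2) with (dpart (p_kerr M a) 7 (g s)).
change (Hp M a (g s) 8) with (- dpart (p_kerr M a) 3 (g s)).
change (Hp M a (g s) 3) with (dpart (p_kerr M a) 8 (g s)).
change (Hp M a (g s) 7) with (- dpart (p_kerr M a) 2 (g s)).
generalize (poisson_Lz_p_kerr M a (g s) (char_regular M a _ HM (bichar_char s Hs))).
unfold minus, plus, opp; simpl. lra.
Qed.

Lemma bichar_xi_t_const s s' : in_dom lo hi s -> in_dom lo hi s' -> g s 5%nat = g s' 5%nat.
Proof. apply (in_dom_derive_0_const lo hi (fun t => g t 5%nat)), bichar_derive_xi_t. Qed.

Lemma bichar_Lz_const s s' : in_dom lo hi s -> in_dom lo hi s' -> Lz (g s) = Lz (g s').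
Proof. apply (in_dom_derive_0_const lo hi (fun t => Lz (g t))), bichar_derive_Lz. Qed.

Lemma bichar_F_continuous s : in_dom lo hi s -> continuity_pt (fun t => kerr_F a (g t)) s.
Proof.
intro Hs.
assert (Hr := bichar_derive_r s Hs).
assert (H := is_derive_plus _ _ s _ _
  (is_derive_Rmult _ _ s _ _ (is_derive_plus _ _ s _ _ (is_derive_Rmult _ _ s _ _ Hr Hr)
                                (is_derive_const (a * a) s))
                             (bichar_derive_xi_t s Hs))
  (is_derive_scal _ s a _ (bichar_derive_Lz s Hs))).
apply derivable_continuous_pt. eexists. apply is_derive_Reals.
eapply is_derive_ext; [| exact H]. intro t. unfold kerr_F, plus; simpl. ring.
Qed.

Lemma bichar_F_neg s s' : in_dom lo hi s -> in_dom lo hi s' ->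
  kerr_F a (g s) < 0 -> kerr_F a (g s') < 0.
Proof.
apply (in_dom_neg_const lo hi (fun t => kerr_F a (g t))).
- exact bichar_F_continuous.
- intros t Ht. exact (char_F_neq0 M a _ HM (bichar_char t Ht)).
Qed.

End Bicharacteristic.

Section ConfinedHalfBicharacteristic.

Variables (M a : R) (lo hi : Rbar) (g : R -> nat -> R) (r0 R0 dir : R).
Hypotheses (HM : 0 < Rabs a < M) (Hb : bichar M a lo hi g) (Hr0 : r_plus M a < r0)
  (Hdir : dir = 1 \/ dir = -1)
  (Hdom : forall t, 0 <= t -> in_dom lo hi (dir * t))
  (Hbd : forall t, 0 <= t -> r0 <= g (dir * t) 1%nat <= R0).

Lemma radial_force_escape (sg c : R) : (sg = 1 \/ sg = -1) -> 0 < c ->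
  ~ (forall t, 0 <= t -> c <= sg * radial_force M a (g (dir * t))).
Proof.
intros Hsg Hc Hforce.
destruct (kerr_params M a HM) as (HM0 & Ha & _).
assert (HrM : M < r0) by (destruct (Delta_pos M a r0 HM Hr0); lra).
assert (Hdd : dir * dir = 1) by (destruct Hdir as [-> | ->]; ring).
set (y := fun t => sg * dir * (Delta M a (g (dir * t) 1%nat) * g (dir * t) 6%nat)).
apply (drift_escapes (fun t => sg * g (dir * t) 1%nat) y
  (fun t => sg * (dir * (2 * Delta M a (g (dir * t) 1%nat) * g (dir * t) 6%nat
                         / rho2 a (g (dir * t)))))
  (fun t => sg * dir * (dir * radial_force M a (g (dir * t))))
  c (2 / (R0 ^ 2 + a ^ 2)) R0 Hc).
- apply Rdiv_lt_0_compat; [lra | nra].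
- intros t Ht. split.
  + apply is_derive_scal, (is_derive_rescale (fun s => Delta M a (g s 1%nat) * g s 6%nat)).
    exact (bichar_derive_Delta_xi_r M a lo hi g HM Hb _ (Hdom t Ht)).
  + replace (sg * dir * (dir * radial_force M a (g (dir * t))))
      with (sg * (dir * dir) * radial_force M a (g (dir * t))) by ring.
    rewrite Hdd, Rmult_1_r. exact (Hforce t Ht).
- intros t Ht. split.
  + apply is_derive_scal, (is_derive_rescale (fun s => g s 1%nat)).
    exact (bichar_derive_r M a lo hi g HM Hb _ (Hdom t Ht)).
  + intro Hy1. assert (Hz := bichar_char M a lo hi g Hb _ (Hdom t Ht)).
    assert (Hrho := char_rho2_bounds M a _ Hz). assert (Hrho0 := char_rho2_pos M a _ HM Hz).
    destruct (Hbd t Ht) as [Hr1 Hr2].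
    replace (sg * (dir * (2 * Delta M a (g (dir * t) 1%nat) * g (dir * t) 6%nat
                          / rho2 a (g (dir * t))))) with (2 * y t / rho2 a (g (dir * t)))
      by (unfold y; field; lra).
    apply Rle_trans with (2 / rho2 a (g (dir * t))).
    * apply Rdiv_le_compat; [split; [exact Hrho0 | nra] | lra | lra].
    * unfold Rdiv. apply Rmult_le_compat_r; [left; apply Rinv_0_lt_compat |]; lra.
- intros t Ht. destruct (Hbd t Ht). destruct Hsg as [-> | ->]; lra.
Qed.

Lemma confined_xi_t s0 t : in_dom lo hi s0 -> 0 <= t -> g (dir * t) 5%nat = g s0 5%nat.
Proof. intros Hs0 Ht. exact (bichar_xi_t_const M a lo hi g Hb _ _ (Hdom t Ht) Hs0). Qed.

Lemma confined_F_horizon s0 t : in_dom lo hi s0 -> 0 <= t ->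
  kerr_F_horizon M a (g (dir * t)) = kerr_F_horizon M a (g s0).
Proof.
intros Hs0 Ht. unfold kerr_F_horizon.
rewrite (confined_xi_t s0 t Hs0 Ht), (bichar_Lz_const M a lo hi g HM Hb _ _ (Hdom t Ht) Hs0).
reflexivity.
Qed.

Lemma confined_F_neg_xi_t_nonpos s0 : in_dom lo hi s0 -> kerr_F a (g s0) < 0 -> g s0 5%nat <= 0.
Proof.
intros Hs0 HF0. destruct (Rle_or_lt (g s0 5%nat) 0) as [HE | HE]; [exact HE | exfalso].
destruct (kerr_params M a HM) as (HM0 & Ha & _).
assert (HrM : M < r0) by (destruct (Delta_pos M a r0 HM Hr0); lra).
assert (HR0 : r0 <= R0) by (destruct (Hbd 0 (Rle_refl 0)); lra).
set (E0 := g s0 5%nat) in *.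
apply (radial_force_escape (-1)
  ((r0 ^ 2 * E0) ^ 2 * (2 * (r0 - M)) / (a ^ 2 * (R0 ^ 2 + a ^ 2))) (or_intror eq_refl)).
- assert (0 < R0 ^ 2 + a ^ 2) by nra.
  assert (0 < (r0 ^ 2 * E0) ^ 2) by (apply pow_lt, Rmult_lt_0_compat; [apply pow_lt |]; lra).
  apply Rdiv_lt_0_compat; apply Rmult_lt_0_compat; lra.
- intros t Ht. assert (Hz := bichar_char M a lo hi g Hb _ (Hdom t Ht)).
  assert (HE' := confined_xi_t s0 t Hs0 Ht). fold E0 in HE'.
  assert (H := char_radial_force_le M a _ HM Hz r0 R0 Hr0 (Hbd t Ht) ltac:(rewrite HE'; exact HE)
    (bichar_F_neg M a lo hi g HM Hb _ _ Hs0 (Hdom t Ht) HF0)).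
  rewrite HE' in H. lra.
Qed.

Lemma confined_F_neg_horizon_nonpos s0 : in_dom lo hi s0 -> kerr_F a (g s0) < 0 ->
  g s0 5%nat < 0 -> kerr_F_horizon M a (g s0) <= 0.
Proof.
intros Hs0 HF0 HE.
destruct (Rle_or_lt (kerr_F_horizon M a (g s0)) 0) as [HG | HG]; [exact HG | exfalso].
destruct (kerr_params M a HM) as (HM0 & Ha & _).
destruct (Delta_pos M a r0 HM Hr0) as [HrM HD0].
assert (HR0 : r0 <= R0) by (destruct (Hbd 0 (Rle_refl 0)); lra).
assert (HD1 : 0 < Delta M a R0) by (apply (Delta_pos M a R0 HM); lra).
set (E0 := g s0 5%nat) in *. set (G0 := kerr_F_horizon M a (g s0)) in *.
apply (radial_force_escape 1
  (2 * r0 ^ 2 * (- E0) * Delta M a r0 / (3 * Delta M a R0 + a ^ 2) * G0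
    * (2 * (r0 - M)) / (Delta M a R0 * (R0 ^ 2 + a ^ 2))) (or_introl eq_refl)).
- assert (0 < r0 ^ 2) by (apply pow_lt; lra).
  assert (0 < R0 ^ 2 + a ^ 2) by nra.
  assert (0 < 2 * r0 ^ 2 * (- E0) * Delta M a r0)
    by (apply Rmult_lt_0_compat; [apply Rmult_lt_0_compat; [apply Rmult_lt_0_compat |] |]; lra).
  apply Rdiv_lt_0_compat;
    [apply Rmult_lt_0_compat; [apply Rmult_lt_0_compat; [apply Rdiv_lt_0_compat |] |]
    | apply Rmult_lt_0_compat]; lra.
- intros t Ht. assert (Hz := bichar_char M a lo hi g Hb _ (Hdom t Ht)).
  assert (HE' := confined_xi_t s0 t Hs0 Ht). fold E0 in HE'.
  assert (HG' := confined_F_horizon s0 t Hs0 Ht). fold G0 in HG'.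
  assert (H := char_radial_force_ge M a _ HM Hz r0 R0 Hr0 (Hbd t Ht)
    ltac:(rewrite HE'; exact HE) (bichar_F_neg M a lo hi g HM Hb _ _ Hs0 (Hdom t Ht) HF0)
    ltac:(rewrite HG'; exact HG)).
  rewrite HE', HG' in H. lra.
Qed.

Lemma half_trapped_future_pointing z : on_curve lo hi g z ->
  0 < xi_dt z \/ 0 < xi_vH M a z -> future_pointing M a z.
Proof.
intros [s0 [Hs0 Heq]] Hsign.
destruct (char_data_agree M a z (g s0) Heq (bichar_char M a lo hi g Hb s0 Hs0))
  as (Hz & HF & HE & HG).
destruct (Rtotal_order 0 (kerr_F a z)) as [HFpos | [HF0 | HFneg]].
- exact (char_future_pointing M a z HM Hz HFpos).
- exfalso. exact (char_F_neq0 M a z HM Hz (eq_sym HF0)).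
- exfalso. rewrite <- HF in HFneg.
  assert (HE0 := confined_F_neg_xi_t_nonpos s0 Hs0 HFneg). rewrite HE in HE0.
  assert (HG0 : 0 < kerr_F_horizon M a z).
  { destruct Hsign as [Ht | Hv]; [unfold xi_dt in Ht; lra |].
    rewrite kerr_F_horizon_xi_vH by exact HM.
    destruct (kerr_params M a HM) as (HM0 & Ha & _). destruct (r_plus_spec M a HM).
    apply Rmult_lt_0_compat; [nra | exact Hv]. }
  assert (HEneg : z 5%nat < 0).
  { destruct HE0 as [| HE0]; [assumption |].
    assert (Hsplit := kerr_F_split M a z). rewrite HF, HE0 in *. lra. }
  rewrite <- HE in HEneg.
  assert (HG1 := confined_F_neg_horizon_nonpos s0 Hs0 HFneg HEneg). rewrite HG in HG1. lra.
Qed.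

End ConfinedHalfBicharacteristic.

Theorem proposition6p6 (M a : R) (z : nat -> R) :
  0 < Rabs a < M ->
  Gamma_plus M a z \/ Gamma_minus M a z ->
  0 < xi_dt z \/ 0 < xi_vH M a z ->
  future_pointing M a z.
Proof.
intros HM [Hplus | Hminus] Hsign.
- destruct Hplus as (lo & hi & g & [Hb _] & (Hhi & Hlo & r0 & R0 & Hr0 & _ & Hbd) & Hz).
  apply (half_trapped_future_pointing M a lo hi g r0 R0 (-1) HM Hb Hr0 (or_intror eq_refl));
    try assumption.
  + intros t Ht. subst lo. split; [exact I |].
    apply Rbar_le_lt_trans with 0; [simpl; lra | exact Hhi].
  + intros t Ht. apply Hbd. lra.
- destruct Hminus as (lo & hi & g & [Hb _] & (Hlo & Hhi & r0 & R0 & Hr0 & _ & Hbd) & Hz).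
  apply (half_trapped_future_pointing M a lo hi g r0 R0 1 HM Hb Hr0 (or_introl eq_refl));
    try assumption.
  + intros t Ht. subst hi. split; [| exact I].
    apply Rbar_lt_le_trans with 0; [exact Hlo | simpl; lra].
  + intros t Ht. apply Hbd. lra.
Qed.
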